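(* For every integer $n\ge1$ and every $k=1,\dots,n$, one has $|a_{nk}|>1$ and $|b_{nk}|<1$.
   Context: For $n\ge1$ let $y_n(z)=\sum_{k=0}^{n}\frac{(n+k)!}{(n-k)!\,k!}\left(\frac{z}{2}\right)^k$ be the $n$-th Bessel polynomial and let $\alpha_{n1},\dots,\alpha_{nn}$ be its zeros (they are simple). Put $a_{nk}=1-\alpha_{nk}/2$ and $b_{nk}=1+\alpha_{nk}/2$ for $k=1,\dots,n$. *)

(* complex numbers are modelled by algC (algebraic complex numbers);
   all zeros of the rational-coefficient Bessel polynomials lie in algC. *)
From HB Require Import structures.
From mathcomp Require Import all_boot all_order all_algebra all_field.
Set Implicit Arguments. Unset Strict Implicit. Unset Printing Implicit Defensive.
Import Order.TTheory GRing.Theory Num.Theory.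
Local Open Scope ring_scope.

Definition bessel_poly (n : nat) : {poly algC} :=
  \sum_(k < n.+1)
     (((n + k)`!)%:R / (((n - k)`!)%:R * (k`!)%:R)) *: ('X * (2^-1)%:P) ^+ k.

From HB Require Import structures.
From mathcomp Require Import all_boot all_order all_algebra all_field.
From mathcomp Require Import ring zify.
Set Implicit Arguments.
Unset Strict Implicit.
Unset Printing Implicit Defensive.
Import Order.TTheory GRing.Theory Num.Theory.
Local Open Scope ring_scope.

(* The Bessel polynomials satisfy y_{k+1} = y_{k-1} + (2k+1) z y_k.  At a zero a
   of y_n, the products P_k = conj(y_{k-1}) y_k satisfy
   P_{k+1} = conj(P_k) + a (2k+1) |y_k|^2, so summing real parts from P_0 = 1 to
   P_n = 0 gives Re(a) Q = -1 with Q = sum_{k<n} (2k+1) |y_k|^2 >= 1.  Hence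
   -1 <= Re a < 0, and Re a < 0 already gives |1 - a/2| > 1.  The same telescoping
   shows Re P_k >= 0 for k <= n; writing the telescoping sum
   sum_{k<n} (|y_{k+1}|^2 - |y_{k-1}|^2) = |y_{n-1}|^2 - 2 through Re P and Im P
   then bounds (Im a)^2 Q by 2.  So |a|^2 Q <= -Re a + 2 <= 3 < 4 = -4 Re(a) Q,
   i.e. |1 + a/2| < 1. *)

Lemma natr_fact_neq0 (F : numFieldType) m : (m`!)%:R != 0 :> F.
Proof. by rewrite pnatr_eq0 -lt0n fact_gt0. Qed.

Definition bessel_coef (n k : nat) : algC :=
  ((n + k)`!)%:R / (((n - k)`!)%:R * (k`!)%:R).

Lemma coef_bessel_poly n j :
  (bessel_poly n)`_j = if (j <= n)%N then bessel_coef n j * 2^-1 ^+ j else 0.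
Proof.
have -> : bessel_poly n = \poly_(k < n.+1) (bessel_coef n k * 2^-1 ^+ k).
  rewrite poly_def; apply: eq_bigr => k _.
  by rewrite exprMn -rmorphXn /= [X in _ *: X]mulrC mul_polyC scalerA.
by rewrite coef_poly ltnS.
Qed.

Lemma bessel_coef0 n : bessel_coef n 0 = 1.
Proof. by rewrite /bessel_coef addn0 subn0 fact0 mulr1 divff // natr_fact_neq0. Qed.

Lemma bessel_coef_addn p q :
  bessel_coef (q + p) q = ((q + p + q)`!)%:R / ((p`!)%:R * (q`!)%:R).
Proof. by rewrite /bessel_coef addKn. Qed.

Lemma bessel_coefS i k : (i <= k)%N ->
  bessel_coef k.+1 i.+1 =
  (if (i.+1 <= k.-1)%N then bessel_coef k.-1 i.+1 else 0)
  + 2 * (k.*2.+1)%:R * bessel_coef k i.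
Proof.
move=> ik; have [m ->] : exists m, k = (i + m)%N by exists (k - i)%N; lia.
have -> : ((i + m).+1 = i.+1 + m)%N by lia.
rewrite !bessel_coef_addn (_ : (i.+1 + m + i.+1 = (i + m + i).+2)%N); last by lia.
case: m => [|[|m]] /=.
- rewrite ifF; last by lia.
  rewrite add0r !factS !addn0 -!mul2n !natrM !mulrSr !natrD.
  by field; rewrite !natr_fact_neq0 !natr1 !pnatr_eq0.
- rewrite ifF; last by lia.
  rewrite add0r !factS fact0 -!mul2n !natrM !mulrSr !natrD.
  by field; rewrite !natr_fact_neq0 !natr1 !pnatr_eq0.
- rewrite ifT; last by lia.
  rewrite (_ : ((i + m.+2).-1 = i.+1 + m)%N); last by lia.
  rewrite bessel_coef_addn (_ : (i.+1 + m + i.+1 = i + m.+2 + i)%N); last by lia.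
  rewrite !factS -!mul2n !natrM !mulrSr !natrD.
  by field; rewrite !natr_fact_neq0 !natr1 !pnatr_eq0.
Qed.

Lemma bessel_poly0 : bessel_poly 0 = 1.
Proof.
apply/polyP => j; rewrite coef_bessel_poly coefC.
by case: j => [|j] //=; rewrite bessel_coef0 expr0 mulr1.
Qed.

Lemma bessel_polyS k :
  bessel_poly k.+1 = bessel_poly k.-1 + (k.*2.+1)%:R *: ('X * bessel_poly k).
Proof.
apply/polyP => -[|i]; rewrite coefD coefZ coefXM !coef_bessel_poly /=.
  by rewrite !bessel_coef0 mulr0 addr0 !expr0 !mulr1.
case: (leqP i k) => ik; last by rewrite !ifF ?mulr0 ?addr0 //; lia.
rewrite ltnS ik bessel_coefS // exprS.
by case: ifP => _; rewrite ?add0r; field.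
Qed.

Section ThreeTermRecurrence.

Variables (C : numClosedFieldType) (a : C) (y : nat -> C).
Hypothesis y0 : y 0 = 1.
(* With truncated predecessor, [y 0.-1 = y 0 = 1] plays the role of [y_{-1}]. *)
Hypothesis yS : forall k, y k.+1 = y k.-1 + (k.*2.+1)%:R * a * y k.

Let c k : C := (k.*2.+1)%:R.
Let s := a + a^*.
Let d := a - a^*.
Let mass k := c k * (y k * (y k)^*).
Let cross k := (y k.-1)^* * y k.
Let re_cross k := cross k + (cross k)^*.
Let im_cross k := cross k - (cross k)^*.

Let c_conj k : (c k)^* = c k.
Proof. exact: conjC_nat. Qed.

Let mass_ge0 k : 0 <= mass k.
Proof. by rewrite mulr_ge0 ?ler0n ?mul_conjC_ge0. Qed.

Let mass_conj k : (mass k)^* = mass k.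
Proof. by rewrite /mass !rmorphM /= c_conj conjCK [_^* * _]mulrC. Qed.

Let crossS k : cross k.+1 = (cross k)^* + a * mass k.
Proof. by rewrite /cross /mass yS rmorphM /= conjCK; ring. Qed.

Let re_crossS k : re_cross k.+1 - re_cross k = s * mass k.
Proof.
rewrite /re_cross crossS rmorphD rmorphM /= conjCK mass_conj /s; ring.
Qed.

Let im_crossS k : im_cross k.+1 + im_cross k = d * mass k.
Proof.
rewrite /im_cross crossS rmorphD rmorphM /= conjCK mass_conj /d; ring.
Qed.

Let norm_step k :
  y k.+1 * (y k.+1)^* - y k.-1 * (y k.-1)^* =
  c k / 4 * (s * (re_cross k + re_cross k.+1) + d * (im_cross k - im_cross k.+1)).
Proof.
rewrite /re_cross /im_cross crossS /cross /mass /s /d yS.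
rewrite !(rmorphD, rmorphM) /= !conjCK c_conj.
by field.
Qed.

Let cross0 : cross 0 = 1.
Proof. by rewrite /cross /= y0 conjC1 mulr1. Qed.

Variable n : nat.
Hypotheses (n_gt0 : (0 < n)%N) (yn0 : y n = 0).

Let Q := \sum_(0 <= k < n) mass k.

Let crossn : cross n = 0.
Proof. by rewrite /cross yn0 mulr0. Qed.

Let Q_ge1 : 1 <= Q.
Proof.
rewrite /Q big_ltn // {1}/mass /c y0 conjC1 !mulr1 lerDl.
by apply: sumr_ge0 => k _; apply: mass_ge0.
Qed.

Let Q_gt0 : 0 < Q.
Proof. exact: lt_le_trans ltr01 Q_ge1. Qed.

Let re_sum k : (k <= n)%N -> s * \sum_(k <= i < n) mass i = - re_cross k.
Proof.
move=> kn; rewrite mulr_sumr.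
under eq_bigr do rewrite -re_crossS.
by rewrite telescope_sumr // /re_cross crossn rmorph0 addr0 sub0r.
Qed.

Let sQ : s * Q = - 2.
Proof. by rewrite /Q re_sum // /re_cross cross0 conjC1. Qed.

Let s_lt0 : s < 0.
Proof. by rewrite -(pmulr_llt0 _ Q_gt0) sQ oppr_lt0 ltr0n. Qed.

Let s_ge_m2 : - 2 <= s.
Proof.
rewrite -sQ -subr_ge0 -{1}[s]mulr1 -mulrBr.
by rewrite mulr_le0 ?subr_le0 // ltW.
Qed.

Let re_cross_ge0 k : (k <= n)%N -> 0 <= re_cross k.
Proof.
move=> kn; rewrite -[re_cross k]opprK -re_sum // oppr_ge0 mulr_le0_ge0 //.
  exact: ltW.
by apply: sumr_ge0 => i _; apply: mass_ge0.
Qed.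

Let T := \sum_(0 <= k < n) c k * (re_cross k + re_cross k.+1).

Let T_ge0 : 0 <= T.
Proof.
rewrite /T big_nat_cond; apply: sumr_ge0 => k /andP[/andP[_ kn] _].
by rewrite mulr_ge0 ?ler0n // addr_ge0 // re_cross_ge0 // ltnW.
Qed.

Let im_sum : \sum_(0 <= k < n) c k * (im_cross k - im_cross k.+1) = d * Q.
Proof.
pose F k := 2 * k%:R * im_cross k.
have step k : c k * (im_cross k - im_cross k.+1) = d * mass k - (F k.+1 - F k).
  by rewrite -im_crossS /F /c -mul2n mulrSr natrM mulrSr; ring.
rewrite (eq_bigr _ (fun k _ => step k)) sumrB telescope_sumr // /F /im_cross crossn.
by rewrite rmorph0 !(subrr, mulr0, mul0r) subr0 /Q mulr_sumr.
Qed.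

Let norm_sum :
  \sum_(0 <= k < n) (y k.+1 * (y k.+1)^* - y k.-1 * (y k.-1)^*) =
  y n.-1 * (y n.-1)^* - 2.
Proof.
pose G k := y k * (y k)^* + y k.-1 * (y k.-1)^*.
have step k : y k.+1 * (y k.+1)^* - y k.-1 * (y k.-1)^* = G k.+1 - G k.
  by rewrite /G; ring.
rewrite (eq_bigr _ (fun k _ => step k)) telescope_sumr // /G /= yn0 y0.
by rewrite conjC1 mul0r add0r mulr1.
Qed.

Let im_bound : d * d^* * Q <= 8.
Proof.
have d_conj : d^* = - d by rewrite /d rmorphB /= conjCK opprB.
set N := y n.-1 * (y n.-1)^*.
have N_ge0 : 0 <= N by apply: mul_conjC_ge0.
have normE : N - 2 = s / 4 * T + d / 4 * (d * Q).
  rewrite -norm_sum -im_sum /T !mulr_sumr -big_split /=.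
  by apply: eq_bigr => k _; rewrite norm_step; ring.
have -> : d * d^* * Q = s * T + 8 - 4 * N.
  have -> : N = 2 + (s / 4 * T + d / 4 * (d * Q)) by rewrite -normE; ring.
  by rewrite d_conj; field.
rewrite -subr_ge0 (_ : 8 - _ = - (s * T) + 4 * N); last by ring.
rewrite addr_ge0 //; first by rewrite oppr_ge0 mulr_le0_ge0 // ltW.
by rewrite mulr_ge0 ?ler0n.
Qed.

Lemma recurrence_root_bounds : a + a^* < 0 /\ a * a^* < - 2 * (a + a^*).
Proof.
split; first exact: s_lt0.
have normC_a : 4 * (a * a^*) = s * s + d * d^*.
  by rewrite /s /d rmorphB /= conjCK; ring.
rewrite -/s -(ltr_pM2r Q_gt0) -(@ltr_pM2l _ 4) ?ltr0n //.
have -> : 4 * (a * a^* * Q) = - 2 * s + d * d^* * Q.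
  by rewrite mulrA normC_a mulrDl -mulrA sQ; ring.
have -> : 4 * (- 2 * s * Q) = 16 by rewrite -mulrA sQ; ring.
have s_bound : - 2 * s <= 4.
  rewrite mulNr -mulrN (_ : 4 = 2 * 2); last by ring.
  by rewrite ler_pM2l // lerNl.
rewrite (le_lt_trans (lerD s_bound im_bound)) //.
by rewrite -natrD ltr_nat.
Qed.

End ThreeTermRecurrence.

Lemma normC_1_sub_half_gt1 (C : numClosedFieldType) (z : C) :
  z + z^* < 0 -> 1 < `|1 - z / 2|.
Proof.
move=> re_lt0; rewrite -(@ltr_pXn2r _ 2) ?nnegrE // expr1n normCK.
rewrite rmorphB rmorphM fmorphV /= conjC1 conjC_nat.
have -> : (1 - z / 2) * (1 - z^* / 2) = 1 + (z * z^* - 2 * (z + z^*)) / 4.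
  by field.
rewrite ltrDl divr_gt0 ?ltr0n // subr_gt0 (lt_le_trans _ (mul_conjC_ge0 z)) //.
by rewrite pmulr_rlt0 ?ltr0n.
Qed.

Lemma normC_1_add_half_lt1 (C : numClosedFieldType) (z : C) :
  z * z^* < - 2 * (z + z^*) -> `|1 + z / 2| < 1.
Proof.
move=> in_disk; rewrite -(@expr_lt1 _ 2) // normCK.
rewrite rmorphD rmorphM fmorphV /= conjC1 conjC_nat.
have -> : (1 + z / 2) * (1 + z^* / 2) = 1 + (z * z^* - (- 2 * (z + z^*))) / 4.
  by field.
by rewrite gtrDl pmulr_llt0 ?invr_gt0 ?ltr0n // subr_lt0.
Qed.

Theorem proposition2 (n : nat) (hn : (1 <= n)%N) (alpha : algC) :
  root (bessel_poly n) alpha ->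
  1 < `|1 - alpha / 2| /\ `|1 + alpha / 2| < 1.
Proof.
move=> /rootP root_alpha.
pose y k := (bessel_poly k).[alpha].
have y0 : y 0 = 1 by rewrite /y bessel_poly0 hornerC.
have yS k : y k.+1 = y k.-1 + (k.*2.+1)%:R * alpha * y k.
  by rewrite /y bessel_polyS hornerD hornerZ [('X * _)]mulrC hornerMX mulrA mulrAC.
have [re_lt0 in_disk] := recurrence_root_bounds y0 yS hn root_alpha.
split; [exact: normC_1_sub_half_gt1 | exact: normC_1_add_half_lt1].
Qed.
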